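(* Consider the Qs predictor with queue capacity $\mathrm{qcap}\ge2$ processing an arbitrary sequence of items. For any item $i$ with a queue $q(i)$ (so $|q(i)|\le\mathrm{qcap}$), let $Y_i:=\sum_{0\le j<|q(i)|}c_j-1$ and use the estimate $Q(i)=(|q(i)|-1)/Y_i$ (and $Q(i)=0$ when $|q(i)|\le1$ or $i$ has no queue). Then for every time $t\ge1$: (1) $Q^{(t)}(i)$, when nonzero, has the form $a/b$ with $a,b$ integers and $b\ge a\ge1$; (2) for an item $i$ with a queue at time $t$: if $i$ is not observed at time $t$, then $Y_i^{(t+1)}=Y_i^{(t)}+1$ or $i$ is removed from the queue map; if $i$ is observed at time $t$, then $Y_i^{(t+1)}\le Y_i^{(t)}$ when $|q^{(t)}(i)|=\mathrm{qcap}$, and $Y_i^{(t+1)}=Y_i^{(t)}+1$ when $|q^{(t)}(i)|<\mathrm{qcap}$; (3) if $i$ is observed at time $t$, then $Q^{(t+1)}(i)\ge Q^{(t)}(i)$; if $i$ is not observed at time $t$, then $Q^{(t+1)}(i)<Q^{(t)}(i)$ or $Q^{(t+1)}(i)=Q^{(t)}(i)=0$.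
   Context: The Qs predictor keeps a map from items to queues of positive integer counts (''cells''), the newest cell being $c_0$ (''cell0''), the older cells $c_1,c_2,\dots$; each queue holds at most $\mathrm{qcap}$ cells. At each time $t$, the predictor first outputs its estimates $Q^{(t)}$, then observes the item $o^{(t)}$ and updates: if $o^{(t)}$ has no queue, an empty queue is created for it; then the queue of $o^{(t)}$ receives a positive update (if it has fewer than $\mathrm{qcap}$ cells its size grows by one; all existing cells shift one position older, the oldest being discarded if the queue was at capacity; and a new cell $c_0=1$ is created), while every other existing queue receives a negative update (its $c_0$ is incremented by $1$). Occasionally (pruning) items may be removed from the map together with their queues. $q^{(t)}(i)$, $Y_i^{(t)}$ and $Q^{(t)}(i)$ denote the queue of $i$, the quantity $Y_i$, and the estimate at time $t$, i.e. before the update at time $t$. *)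

From mathcomp Require Import all_boot all_order all_algebra.
Set Implicit Arguments. Unset Strict Implicit. Unset Printing Implicit Defensive.
Import Order.TTheory GRing.Theory Num.Theory.

(* A queue is a seq of counts, head = newest cell c_0, then c_1, c_2, ... *)
Definition queue := seq nat.
Definition qmap (T : eqType) := T -> option queue.

Definition empty_qmap (T : eqType) : qmap T := fun _ => None.

Definition pos_update (qcap : nat) (q : queue) : queue :=
  1 :: take qcap.-1 q.

Definition neg_update (q : queue) : queue :=
  match q with [::] => [::] | c :: r => c.+1 :: r end.

Definition update (T : eqType) (qcap : nat) (M : qmap T) (x : T) : qmap T :=
  fun j => if j == x then Some (pos_update qcap (odflt [::] (M j)))
           else omap neg_update (M j).

(* One step from time t to t+1: update by the observation, then pruning may
   remove items other than the item just observed. *)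
Definition qs_step (T : eqType) (qcap : nat) (M : qmap T) (x : T) (M' : qmap T) : Prop :=
  M' x = update qcap M x x /\
  forall j, j != x -> M' j = None \/ M' j = update qcap M x j.

(* A run: S t is the map at time t (before the update at time t), t >= 1,
   starting from the empty map; o t is the item observed at time t. *)
Definition qs_run (T : eqType) (qcap : nat) (o : nat -> T) (S : nat -> qmap T) : Prop :=
  S 1%N = @empty_qmap T /\ forall t, (1 <= t)%N -> qs_step qcap (S t) (o t) (S t.+1).

Local Open Scope ring_scope.

Definition Yq (q : queue) : int := (sumn q)%:Z - 1.

Definition est_q (q : queue) : rat :=
  if (size q <= 1)%N then 0 else (size q).-1%:R / (Yq q)%:~R.

Definition Qest (T : eqType) (M : qmap T) (i : T) : rat :=
  match M i with None => 0 | Some q => est_q q end.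

(* Along a run every queue is non-empty, has positive cells and at most qcap
   cells, so with s = |q| and S = sum of the cells we have 1 <= s <= S and
   Q = (s - 1) / (S - 1).  A negative update raises S by one and keeps s,
   hence lowers Q strictly once s >= 2.  A positive update either adds a cell
   1 (s and S both grow by one, and (s-1)/(S-1) <= s/S because s <= S) or, at
   capacity, replaces the oldest cell by a new cell 1, which keeps s and does
   not increase S. *)

From mathcomp Require Import all_boot all_order all_algebra.
From mathcomp Require Import zify.
Set Implicit Arguments. Unset Strict Implicit. Unset Printing Implicit Defensive.
Import Order.TTheory GRing.Theory Num.Theory.
Local Open Scope ring_scope.

Definition positive_cells (q : queue) : bool := all (fun c => 0 < c)%N q.

Definition valid_queue (qcap : nat) (q : queue) : bool :=
  [&& q != [::], positive_cells q & (size q <= qcap)%N].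

Definition valid_qmap (T : eqType) (qcap : nat) (M : qmap T) : Prop :=
  forall j q, M j = Some q -> valid_queue qcap q.

Lemma valid_qmap_odflt (T : eqType) (qcap : nat) (M : qmap T) (j : T) :
  valid_qmap qcap M ->
  positive_cells (odflt [::] (M j)) && (size (odflt [::] (M j)) <= qcap)%N.
Proof.
move=> valid_M; case E: (M j) => [q|] //=.
by case/and3P: (valid_M _ _ E) => _ -> ->.
Qed.

Lemma size_le_sumn (q : queue) : positive_cells q -> (size q <= sumn q)%N.
Proof. by elim: q => //= c q IH /andP[c0 /IH]; lia. Qed.

Lemma pos_update_nonfull (qcap : nat) (q : queue) :
  (size q < qcap)%N -> pos_update qcap q = 1%N :: q.
Proof. by move=> lt_q; rewrite /pos_update take_oversize //; lia. Qed.

Lemma size_pos_update_full (qcap : nat) (q : queue) :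
  (0 < qcap)%N -> size q = qcap -> size (pos_update qcap q) = qcap.
Proof. by move=> qcap0 sz_q; rewrite /= size_take; case: ifP; lia. Qed.

Lemma sumn_pos_update_full (qcap : nat) (q : queue) :
  (0 < qcap)%N -> positive_cells q -> size q = qcap ->
  (sumn (pos_update qcap q) <= sumn q)%N.
Proof.
move=> qcap0; case/lastP: q => [_ sz_q|q c]; first by rewrite -sz_q in qcap0.
rewrite size_rcons -cats1 /positive_cells all_cat /= => /and3P[_ c0 _] <- /=.
by rewrite take_size_cat // sumn_cat /=; lia.
Qed.

Lemma positive_cells_pos_update (qcap : nat) (q : queue) :
  positive_cells q -> positive_cells (pos_update qcap q).
Proof.
by rewrite /positive_cells -{1}(cat_take_drop qcap.-1 q) all_cat => /andP[].
Qed.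

Lemma valid_pos_update (qcap : nat) (q : queue) :
  (0 < qcap)%N -> positive_cells q -> valid_queue qcap (pos_update qcap q).
Proof.
move=> qcap0 pos_q; rewrite /valid_queue positive_cells_pos_update //=.
by rewrite size_take; case: ifP; lia.
Qed.

Lemma valid_neg_update (qcap : nat) (q : queue) :
  valid_queue qcap q -> valid_queue qcap (neg_update q).
Proof.
by case: q => // c q /and3P[_ /andP[_ pos_q] sz_q]; apply/and3P.
Qed.

Lemma Yq_neg_update (q : queue) : q != [::] -> Yq (neg_update q) = Yq q + 1.
Proof. by case: q => //= c q _; rewrite /Yq /=; lia. Qed.

Lemma Yq_pos_update_nonfull (qcap : nat) (q : queue) :
  (size q < qcap)%N -> Yq (pos_update qcap q) = Yq q + 1.
Proof. by move=> lt_q; rewrite pos_update_nonfull // /Yq /=; lia. Qed.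

Lemma Yq_pos_update_full (qcap : nat) (q : queue) :
  (0 < qcap)%N -> positive_cells q -> size q = qcap ->
  Yq (pos_update qcap q) <= Yq q.
Proof.
move=> qcap0 pos_q sz_q; have := sumn_pos_update_full qcap0 pos_q sz_q.
by rewrite /Yq; lia.
Qed.

Lemma ler_natdiv (R : numFieldType) (a b c d : nat) : (0 < b)%N -> (0 < d)%N ->
  (a%:R / b%:R <= c%:R / d%:R :> R) = (a * d <= c * b)%N.
Proof.
move=> b0 d0.
by rewrite ler_pdivrMr ?ltr0n // mulrAC ler_pdivlMr ?ltr0n // -!natrM ler_nat.
Qed.

Lemma ltr_natdiv (R : numFieldType) (a b c d : nat) : (0 < b)%N -> (0 < d)%N ->
  (a%:R / b%:R < c%:R / d%:R :> R) = (a * d < c * b)%N.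
Proof.
move=> b0 d0.
by rewrite ltr_pdivrMr ?ltr0n // mulrAC ltr_pdivlMr ?ltr0n // -!natrM ltr_nat.
Qed.

Lemma est_qE (q : queue) : positive_cells q ->
  est_q q = if (size q <= 1)%N then 0 else (size q).-1%:R / (sumn q).-1%:R.
Proof.
move=> pos_q; rewrite /est_q; case: ifP => // sz_q.
have le_sz := size_le_sumn pos_q.
by have -> : Yq q = (sumn q).-1%:Z by rewrite /Yq; lia.
Qed.

Lemma est_q_ge0 (q : queue) : positive_cells q -> 0 <= est_q q.
Proof.
by move=> pos_q; rewrite est_qE //; case: ifP => // _; exact: divr_ge0.
Qed.

Lemma est_q_ratio (q : queue) : positive_cells q -> est_q q != 0 ->
  exists a b : int, 1 <= a /\ a <= b /\ est_q q = a%:~R / b%:~R.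
Proof.
move=> pos_q; have le_sz := size_le_sumn pos_q.
rewrite est_qE //; case: ifP => // sz_q _.
by exists (size q).-1%:Z, (sumn q).-1%:Z; do !split; lia.
Qed.

Lemma est_q_pos_update (qcap : nat) (q : queue) :
  (0 < qcap)%N -> positive_cells q -> (size q <= qcap)%N ->
  est_q q <= est_q (pos_update qcap q).
Proof.
move=> qcap0 pos_q le_q.
have pos_q' := positive_cells_pos_update qcap pos_q.
have le_sz := size_le_sumn pos_q; have le_sz' := size_le_sumn pos_q'.
have [s1|s2] := leqP (size q) 1%N.
  by rewrite [est_q q]est_qE // s1 est_q_ge0.
rewrite !est_qE //; move: le_q; rewrite leq_eqVlt => /orP[/eqP sz_q|lt_q].
  have := sumn_pos_update_full qcap0 pos_q sz_q.
  move: le_sz'; rewrite size_pos_update_full // => le_sz' le_sum.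
  rewrite ifN; last lia.
  by rewrite ifN ?ler_natdiv; nia.
move: le_sz'; rewrite pos_update_nonfull //= => le_sz'.
by rewrite !ifN ?ler_natdiv; nia.
Qed.

Lemma est_q_neg_update (q : queue) : positive_cells q ->
  est_q (neg_update q) < est_q q \/ est_q (neg_update q) = 0 /\ est_q q = 0.
Proof.
case: q => [|c r] pos_q; first by right.
have pos_q' : positive_cells (neg_update (c :: r)).
  by case/andP: pos_q => _ pos_r; apply/andP.
have /= le_sz := size_le_sumn pos_q.
rewrite !est_qE //=; case: ifP => s1; [by right | left].
by rewrite ltr_natdiv; nia.
Qed.

Lemma QestE (T : eqType) (M : qmap T) (i : T) :
  Qest M i = est_q (odflt [::] (M i)).
Proof. by rewrite /Qest; case: (M i). Qed.

Section Step.

Variables (T : eqType) (qcap : nat) (M M' : qmap T) (x : T).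
Hypothesis step : qs_step qcap M x M'.

Lemma qs_step_observed : M' x = Some (pos_update qcap (odflt [::] (M x))).
Proof. by rewrite step.1 /update eqxx. Qed.

Lemma qs_step_other (j : T) : j != x ->
  M' j = None \/ M' j = omap neg_update (M j).
Proof.
by move=> ne_jx; have := step.2 j ne_jx; rewrite /update (negbTE ne_jx).
Qed.

Lemma qs_step_valid : (0 < qcap)%N -> valid_qmap qcap M -> valid_qmap qcap M'.
Proof.
move=> qcap0 valid_M j q; have [-> | ne_jx] := eqVneq j x.
  rewrite qs_step_observed => -[<-]; apply: valid_pos_update => //.
  by case/andP: (valid_qmap_odflt x valid_M).
case: (qs_step_other ne_jx) => -> //.
by case E: (M j) => [q0|] //= [<-]; exact/valid_neg_update/(valid_M _ _ E).
Qed.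

End Step.

Lemma qs_run_valid (T : eqType) (qcap : nat) (o : nat -> T) (M : nat -> qmap T) :
  (0 < qcap)%N -> qs_run qcap o M ->
  forall t, (1 <= t)%N -> valid_qmap qcap (M t).
Proof.
move=> qcap0 [M1 steps]; elim=> // -[_ _|t IH _]; first by rewrite M1.
exact: qs_step_valid (steps t.+1 isT) qcap0 (IH isT).
Qed.

Theorem lemma13 (T : eqType) (qcap : nat) (o : nat -> T) (M : nat -> qmap T) :
  (2 <= qcap)%N -> qs_run qcap o M ->
  forall t : nat, (1 <= t)%N ->
  (* (1) *)
  (forall i : T, Qest (M t) i != 0 ->
     exists a b : int, 1 <= a /\ a <= b /\ Qest (M t) i = a%:~R / b%:~R) /\
  (* (2) *)
  (forall (i : T) (q : queue), M t i = Some q ->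
     (o t != i ->
        M t.+1 i = None \/ exists q', M t.+1 i = Some q' /\ Yq q' = Yq q + 1) /\
     (o t = i ->
        exists q', M t.+1 i = Some q' /\
          ((size q = qcap)%N -> Yq q' <= Yq q) /\
          ((size q < qcap)%N -> Yq q' = Yq q + 1))) /\
  (* (3) *)
  (forall i : T,
     (o t = i -> Qest (M t) i <= Qest (M t.+1) i) /\
     (o t != i -> Qest (M t.+1) i < Qest (M t) i \/
                  (Qest (M t.+1) i = 0 /\ Qest (M t) i = 0))).
Proof.
move=> qcap2 run t t1; have qcap0 : (0 < qcap)%N by lia.
have valid_Mt := qs_run_valid qcap0 run t1.
have step := run.2 t t1.
split; [|split].
- move=> i; rewrite QestE.
  by case/andP: (valid_qmap_odflt i valid_Mt) => pos_i _; exact: est_q_ratio.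
- move=> i q E; have /and3P[nil_q pos_q _] := valid_Mt _ _ E; split.
    rewrite eq_sym => /(qs_step_other step) [->|->]; first by left.
    by rewrite E; right; exists (neg_update q); rewrite Yq_neg_update.
  move=> ti; subst i; rewrite (qs_step_observed step) E.
  exists (pos_update qcap q); split=> //.
  by split; [exact: Yq_pos_update_full qcap0 pos_q | exact: Yq_pos_update_nonfull].
- move=> i; rewrite !QestE.
  have /andP[pos_i le_i] := valid_qmap_odflt i valid_Mt; split.
    move=> ti; subst i; rewrite (qs_step_observed step).
    exact: est_q_pos_update.
  rewrite eq_sym => /(qs_step_other step) [->|->].
    by have := est_q_ge0 pos_i; rewrite le_eqVlt => /orP[/eqP <-|]; auto.
  by case: (M t i) pos_i => [q|] /= pos_i; [exact: est_q_neg_update | right].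
Qed.
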